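(* A well-founded order $P$ is up-regular if and only if it has no level-induced suborder isomorphic to $O_{obs1}$ and no level-induced suborder isomorphic to $O_{obs2}$. Consequently every well-founded order with property (itov) is up-regular.
   Context: Orders are partial orders; $x\sim y$ means $x\ne y$ and $x,y$ incomparable. $O_{obs1}$ is the order on $\{a,b,c,d\}$ whose only comparabilities are $a<b$, $c<d$; $O_{obs2}$ is the order on $\{a,b,c,d\}$ whose only comparabilities are $a<b$, $c<d$, $c<b$. Property (itov): no induced suborder isomorphic to $O_{obs1}$ or $O_{obs2}$. For a well-founded order $Q$, $\mathrm{Level}_Q(x)=\sup\{\mathrm{Level}_Q(y)+1:y<x\}$. A level-induced suborder of $P$ is a subset $S$ with induced order $P|_S$ such that for all $x,y\in S$: $\mathrm{Level}_{P|_S}(x)=\mathrm{Level}_{P|_S}(y)$ iff $\mathrm{Level}_P(x)=\mathrm{Level}_P(y)$. An element $x$ of a well-founded order $P$ is up-regular if for all $y,z$ with $\mathrm{Level}_P(x)<\mathrm{Level}_P(y)=\mathrm{Level}_P(z)$ we have $x<y\iff x<z$; $P$ is up-regular if all its elements are. *)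

From Stdlib Require Import Wellfounded.

(* [lim I f] denotes the least ordinal strictly above every [f i],
   i.e. sup { f i + 1 : i in I }. *)
Inductive ord : Type := lim : forall I : Type, (I -> ord) -> ord.

Fixpoint ole (s t : ord) {struct s} : Prop :=
  match s, t with
  | lim A f, lim B g => forall i : A, exists j : B, ole (f i) (g j)
  end.

Definition olt (s t : ord) : Prop :=
  match t with lim B g => exists j : B, ole s (g j) end.

Definition oeq (s t : ord) : Prop := ole s t /\ ole t s.

Definition Level {T : Type} (R : T -> T -> Prop) (wf : well_founded R) : T -> ord :=
  Fix wf (fun _ => ord)
      (fun x rec => lim {y : T | R y x} (fun y => rec (proj1_sig y) (proj2_sig y))).

Definition restr {T : Type} (R : T -> T -> Prop) (S : T -> Prop) : sig S -> sig S -> Prop :=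
  fun a b => R (proj1_sig a) (proj1_sig b).

Lemma wf_restr {T : Type} (R : T -> T -> Prop) (S : T -> Prop) :
  well_founded R -> well_founded (restr R S).
Proof. intro H. unfold restr. apply Inverse_Image.wf_inverse_image. exact H. Qed.

Definition level_induced {T : Type} (R : T -> T -> Prop) (wf : well_founded R)
  (S : T -> Prop) : Prop :=
  forall x y : sig S,
    oeq (Level (restr R S) (wf_restr R S wf) x) (Level (restr R S) (wf_restr R S wf) y)
    <-> oeq (Level R wf (proj1_sig x)) (Level R wf (proj1_sig y)).

Definition up_regular_elt {T : Type} (R : T -> T -> Prop) (wf : well_founded R) (x : T) : Prop :=
  forall y z : T, olt (Level R wf x) (Level R wf y) -> oeq (Level R wf y) (Level R wf z) ->
    (R x y <-> R x z).

Definition up_regular {T : Type} (R : T -> T -> Prop) (wf : well_founded R) : Prop :=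
  forall x : T, up_regular_elt R wf x.

Inductive four : Type := fa | fb | fc | fd.

Definition Oobs1 (u v : four) : Prop :=
  (u = fa /\ v = fb) \/ (u = fc /\ v = fd).

Definition Oobs2 (u v : four) : Prop :=
  (u = fa /\ v = fb) \/ (u = fc /\ v = fd) \/ (u = fc /\ v = fb).

Definition iso_to {T : Type} (R : T -> T -> Prop) (S : T -> Prop)
  (O : four -> four -> Prop) : Prop :=
  exists f : four -> T,
    (forall i j, f i = f j -> i = j) /\
    (forall t, S t <-> exists i, f i = t) /\
    (forall i j, O i j <-> R (f i) (f j)).

Definition itov {T : Type} (R : T -> T -> Prop) : Prop :=
  ~ (exists S, iso_to R S Oobs1) /\ ~ (exists S, iso_to R S Oobs2).

Definition strict_order {T : Type} (R : T -> T -> Prop) : Prop :=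
  (forall x, ~ R x x) /\ (forall x y z, R x y -> R y z -> R x z).

From Stdlib Require Import Wellfounded Classical FunctionalExtensionality.

(** If [x] violates up-regularity, there are [y], [z] on a common level above
    [x] with [x < y] and not [x < z].  Some predecessor of [z] lies on a level
    at least that of [x], and descending below it we find [c < z] on the level
    of [x].  Then [{x, y, c, z}] is a two-layered suborder isomorphic to
    [O_obs1] or [O_obs2] (according to whether [c < y]), and it is level
    induced because in a two-layered order the levels are just the layers.
    Conversely, in a level-induced copy of either obstruction the elements
    [b] and [d] lie on one level of [P] above [a], and [a < b] but not [a < d]. *)

Lemma ole_refl s : ole s s.
Proof. induction s as [A f IH]; intro i; exists i; apply IH. Qed.

Lemma ole_trans s t u : ole s t -> ole t u -> ole s u.
Proof.
  revert t u; induction s as [A f IH]; intros [B g] [C h] Hst Htu i.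
  destruct (Hst i) as [j Hj]; destruct (Htu j) as [k Hk].
  exists k; eauto.
Qed.

Lemma ole_lim t B (g : B -> ord) j : ole t (g j) -> ole t (lim B g).
Proof.
  revert B g j; induction t as [A f IH]; intros B g j H i; exists j.
  destruct (g j) as [C h]; destruct (H i) as [k Hk].
  exact (IH i C h k Hk).
Qed.

Lemma olt_ole s t : olt s t -> ole s t.
Proof. destruct t as [B g]; intros [j H]; exact (ole_lim s B g j H). Qed.

Lemma olt_ole_trans s t u : olt s t -> ole t u -> olt s u.
Proof.
  destruct t as [B g], u as [C h]; intros [j Hj] H.
  destruct (H j) as [k Hk]; exists k; exact (ole_trans _ _ _ Hj Hk).
Qed.

Lemma olt_irrefl s : ~ olt s s.
Proof.
  induction s as [A f IH]; intros [j Hj]; apply (IH j).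
  apply olt_ole_trans with (lim A f); [exists j; apply ole_refl | exact Hj].
Qed.

(* Classically, [ole] is total. *)
Lemma not_ole_olt s t : ~ ole t s -> olt s t.
Proof.
  revert t; induction s as [A f IH]; intros [B g] H.
  apply not_all_ex_not in H as [j Hj]; exists j.
  destruct (g j) as [C h]; intro i.
  apply (IH i (lim C h)); intro H'; exact (Hj (ex_intro _ i H')).
Qed.

Lemma oeq_sym s t : oeq s t -> oeq t s.
Proof. intros [H1 H2]; split; assumption. Qed.

Lemma oeq_trans s t u : oeq s t -> oeq t u -> oeq s u.
Proof. intros [H1 H2] [H3 H4]; split; eapply ole_trans; eassumption. Qed.

Lemma olt_not_oeq s t : olt s t -> ~ oeq s t.
Proof. intros H [_ H']; exact (olt_irrefl s (olt_ole_trans _ _ _ H H')). Qed.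

Section Levels.

Variables (T : Type) (R : T -> T -> Prop) (wf : well_founded R).

Local Notation L := (Level R wf).

Lemma Level_unfold x : L x = lim {y : T | R y x} (fun y => L (proj1_sig y)).
Proof.
  unfold Level; rewrite Fix_eq; [reflexivity|].
  intros x' g h Hgh; f_equal; apply functional_extensionality; intro; apply Hgh.
Qed.

Lemma Level_lt x y : R x y -> olt (L x) (L y).
Proof. intro Hxy; rewrite (Level_unfold y); exists (exist _ x Hxy); apply ole_refl. Qed.

Lemma Level_le_not_lt x y : ole (L y) (L x) -> ~ R x y.
Proof. intros Hyx Hxy; exact (olt_irrefl _ (olt_ole_trans _ _ _ (Level_lt x y Hxy) Hyx)). Qed.

Definition minimal x : Prop := forall y, ~ R y x.

Lemma Level_minimal_le x t : minimal x -> ole (L x) t.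
Proof.
  intro Hx; rewrite Level_unfold; destruct t as [B g].
  intros [y Hy]; destruct (Hx y Hy).
Qed.

Lemma Level_le_of_minimal_preds x x' :
  (forall y, R y x -> minimal y) -> (exists y, R y x') -> ole (L x) (L x').
Proof.
  intros Hx [y' Hy']; rewrite (Level_unfold x), (Level_unfold x').
  intros [y Hy]; exists (exist _ y' Hy'); apply Level_minimal_le, Hx, Hy.
Qed.

Lemma Level_not_le_minimal x x' : (exists y, R y x) -> minimal x' -> ~ ole (L x) (L x').
Proof.
  intros [y Hy] Hx'; rewrite (Level_unfold x), (Level_unfold x').
  intro H; destruct (H (exist _ y Hy)) as [[y' Hy'] _]; exact (Hx' y' Hy').
Qed.

Hypothesis R_trans : forall x y z, R x y -> R y z -> R x z.

Lemma Level_attained w a : ole a (L w) -> exists c, (c = w \/ R c w) /\ oeq (L c) a.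
Proof.
  induction w as [w IH] using (well_founded_induction wf); intro Ha.
  destruct (classic (ole (L w) a)) as [Hwa | Hwa].
  - exists w; split; [left; reflexivity | split; assumption].
  - apply not_ole_olt in Hwa; rewrite Level_unfold in Hwa.
    destruct Hwa as [[y Hy] Hay].
    destruct (IH y Hy Hay) as [c [Hc Hca]].
    exists c; split; [right | exact Hca].
    destruct Hc as [-> | Hc]; [exact Hy | exact (R_trans _ _ _ Hc Hy)].
Qed.

End Levels.

Arguments minimal {T} R x.

Definition top (i : four) : bool := match i with fb | fd => true | fa | fc => false end.

(* [O] relates only bottom elements to top elements, and every top element
   has a predecessor; its levels are then exactly its two layers. *)
Definition two_layered (O : four -> four -> Prop) : Prop :=
  (forall i j, O i j -> top i = false /\ top j = true) /\
  (forall j, top j = true -> exists i, O i j).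

Lemma two_layered_Oobs1 : two_layered Oobs1.
Proof.
  split; [intros i j [[-> ->] | [-> ->]]; auto|].
  intros [] Hj; try discriminate; unfold Oobs1; eauto.
Qed.

Lemma two_layered_Oobs2 : two_layered Oobs2.
Proof.
  split; [intros i j [[-> ->] | [[-> ->] | [-> ->]]]; auto|].
  intros [] Hj; try discriminate; unfold Oobs2; eauto.
Qed.

Section LayeredCopy.

Variables (T : Type) (R : T -> T -> Prop) (O : four -> four -> Prop) (f : four -> T).
Variables (S : T -> Prop) (wfS : well_founded (restr R S)).
Hypothesis O_layered : two_layered O.
Hypothesis f_iso : forall i j, O i j <-> R (f i) (f j).
Hypothesis S_image : forall t, S t <-> exists i, f i = t.

Local Notation LS := (Level (restr R S) wfS).

Lemma copy_index (u : sig S) : exists i, proj1_sig u = f i.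
Proof. destruct (proj1 (S_image _) (proj2_sig u)) as [i Hi]; exists i; auto. Qed.

Lemma copy_pred_bottom (u v : sig S) i : proj1_sig u = f i -> restr R S v u ->
  exists k, proj1_sig v = f k /\ top k = false /\ top i = true.
Proof.
  intros Hu Hvu; destruct (copy_index v) as [k Hk]; exists k; split; [exact Hk|].
  apply O_layered, f_iso; rewrite <- Hk, <- Hu; exact Hvu.
Qed.

Lemma copy_bottom_minimal (u : sig S) i :
  proj1_sig u = f i -> top i = false -> minimal (restr R S) u.
Proof.
  intros Hu Hi v Hvu; destruct (copy_pred_bottom u v i Hu Hvu) as [_ [_ [_ Hi']]].
  congruence.
Qed.

Lemma copy_preds_minimal (u : sig S) : forall v, restr R S v u -> minimal (restr R S) v.
Proof.
  intros v Hvu; destruct (copy_index u) as [i Hu].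
  destruct (copy_pred_bottom u v i Hu Hvu) as [k [Hv [Hk _]]].
  exact (copy_bottom_minimal v k Hv Hk).
Qed.

Lemma copy_top_has_pred (u : sig S) i :
  proj1_sig u = f i -> top i = true -> exists v, restr R S v u.
Proof.
  intros Hu Hi; destruct (proj2 O_layered i Hi) as [k Hki].
  exists (exist S (f k) (proj2 (S_image _) (ex_intro _ k eq_refl))).
  unfold restr; cbn; rewrite Hu; apply f_iso, Hki.
Qed.

Lemma copy_Level_oeq (u v : sig S) i j : proj1_sig u = f i -> proj1_sig v = f j ->
  (oeq (LS u) (LS v) <-> top i = top j).
Proof.
  intros Hu Hv.
  destruct (top i) eqn:Hi, (top j) eqn:Hj; split; intro H; try reflexivity;
    try discriminate.
  - split; apply Level_le_of_minimal_preds; try apply copy_preds_minimal;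
      eapply copy_top_has_pred; eassumption.
  - destruct (Level_not_le_minimal _ _ _ u v (copy_top_has_pred u i Hu Hi)
      (copy_bottom_minimal v j Hv Hj) (proj1 H)).
  - destruct (Level_not_le_minimal _ _ _ v u (copy_top_has_pred v j Hv Hj)
      (copy_bottom_minimal u i Hu Hi) (proj2 H)).
  - split; apply Level_minimal_le; eapply copy_bottom_minimal; eassumption.
Qed.

End LayeredCopy.

Lemma up_regular_no_copy T (R : T -> T -> Prop) (wf : well_founded R) O S :
  two_layered O -> O fa fb -> ~ O fa fd ->
  up_regular R wf -> level_induced R wf S -> ~ iso_to R S O.
Proof.
  intros HO Hab Had Hup HS [f [_ [S_image f_iso]]].
  pose (b := exist S (f fb) (proj2 (S_image _) (ex_intro _ fb eq_refl))).
  pose (d := exist S (f fd) (proj2 (S_image _) (ex_intro _ fd eq_refl))).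
  assert (Hbd : oeq (Level R wf (f fb)) (Level R wf (f fd))).
  { apply (HS b d), (copy_Level_oeq T R O f S _ HO f_iso S_image b d fb fd);
      reflexivity. }
  apply Had, f_iso, (Hup (f fa) (f fb) (f fd)); try apply f_iso, Hab.
  - apply Level_lt, f_iso, Hab.
  - exact Hbd.
Qed.

Lemma level_induced_image T (R : T -> T -> Prop) (wf : well_founded R) O f :
  two_layered O -> (forall i j, O i j <-> R (f i) (f j)) ->
  (forall i j, oeq (Level R wf (f i)) (Level R wf (f j)) <-> top i = top j) ->
  level_induced R wf (fun t => exists i, f i = t).
Proof.
  intros HO f_iso f_levels [u [i Hi]] [v [j Hj]]; cbn.
  rewrite (copy_Level_oeq T R O f _ _ HO f_iso (fun t => iff_refl _)
    (exist _ u (ex_intro _ i Hi)) (exist _ v (ex_intro _ j Hj)) i j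
    (eq_sym Hi) (eq_sym Hj)).
  subst; symmetry; apply f_levels.
Qed.

Lemma iso_of_cross_pairs (O Q : four -> four -> Prop) :
  (forall i j, O i j -> top i = false /\ top j = true) ->
  (forall i j, top i = true \/ top j = false -> ~ Q i j) ->
  (forall i j, top i = false -> top j = true -> (O i j <-> Q i j)) ->
  forall i j, O i j <-> Q i j.
Proof.
  intros HO HQ Hcross i j.
  destruct (top i) eqn:Hi, (top j) eqn:Hj; try (apply Hcross; assumption);
    split; intro H; try (apply HO in H; destruct H; congruence);
    destruct (HQ i j); auto.
Qed.

Definition quadruple {T : Type} (x y c z : T) (i : four) : T :=
  match i with fa => x | fb => y | fc => c | fd => z end.

Section Violation.

Variables (T : Type) (R : T -> T -> Prop) (wf : well_founded R).
Hypothesis R_trans : forall x y z, R x y -> R y z -> R x z.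

Local Notation L := (Level R wf).

Variables x y z : T.
Hypotheses (Lxy : olt (L x) (L y)) (Lyz : oeq (L y) (L z)).
Hypotheses (Rxy : R x y) (nRxz : ~ R x z).

Lemma violation_witness : exists c, R c z /\ oeq (L c) (L x).
Proof.
  assert (Lxz : olt (L x) (L z)) by exact (olt_ole_trans _ _ _ Lxy (proj1 Lyz)).
  rewrite (Level_unfold _ _ wf z) in Lxz; destruct Lxz as [[w Hwz] Hxw].
  destruct (Level_attained T R wf R_trans w (L x) Hxw) as [c [Hcw Hcx]].
  exists c; split; [|exact Hcx].
  destruct Hcw as [-> | Hcw]; [exact Hwz | exact (R_trans _ _ _ Hcw Hwz)].
Qed.

Variable c : T.
Hypotheses (Rcz : R c z) (Lcx : oeq (L c) (L x)).

Local Notation f := (quadruple x y c z).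

Lemma quadruple_Level i : oeq (L (f i)) (if top i then L y else L x).
Proof. destruct i; cbn; auto using oeq_sym; split; apply ole_refl. Qed.

Lemma quadruple_Level_oeq i j : oeq (L (f i)) (L (f j)) <-> top i = top j.
Proof.
  pose proof (quadruple_Level i) as Hi; pose proof (quadruple_Level j) as Hj.
  assert (Hij : oeq (L (f i)) (L (f j)) <->
                oeq (if top i then L y else L x) (if top j then L y else L x)).
  { split; intro H.
    - exact (oeq_trans _ _ _ (oeq_sym _ _ Hi) (oeq_trans _ _ _ H Hj)).
    - exact (oeq_trans _ _ _ Hi (oeq_trans _ _ _ H (oeq_sym _ _ Hj))). }
  rewrite Hij; destruct (top i), (top j); split; intro H; try reflexivity;
    try discriminate; try (split; apply ole_refl);
    destruct (olt_not_oeq _ _ Lxy); auto using oeq_sym.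
Qed.

Lemma quadruple_not_lt i j : top i = true \/ top j = false -> ~ R (f i) (f j).
Proof.
  intros Hij; apply (Level_le_not_lt T R wf).
  apply ole_trans with (if top j then L y else L x); [apply quadruple_Level|].
  apply ole_trans with (if top i then L y else L x); [|apply quadruple_Level].
  destruct (top i), (top j), Hij; try discriminate;
    solve [apply ole_refl | apply olt_ole, Lxy].
Qed.

Lemma quadruple_injective i j : f i = f j -> i = j.
Proof.
  intros Hf; destruct (Bool.bool_dec (top i) (top j)) as [Hij | Hij].
  - destruct i, j; try reflexivity; try discriminate; cbn in Hf; subst;
      contradiction.
  - destruct Hij; apply quadruple_Level_oeq; rewrite Hf; split; apply ole_refl.
Qed.

Lemma quadruple_copy O : two_layered O ->
  (forall i j, top i = false -> top j = true -> (O i j <-> R (f i) (f j))) ->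
  exists S, level_induced R wf S /\ iso_to R S O.
Proof.
  intros HO Hcross.
  assert (f_iso : forall i j, O i j <-> R (f i) (f j))
    by exact (iso_of_cross_pairs _ _ (proj1 HO) quadruple_not_lt Hcross).
  exists (fun t => exists i, f i = t); split.
  - exact (level_induced_image T R wf O f HO f_iso quadruple_Level_oeq).
  - exists f; split; [exact quadruple_injective | split; [reflexivity | exact f_iso]].
Qed.

Lemma violation_copy :
  (exists S, level_induced R wf S /\ iso_to R S Oobs1) \/
  (exists S, level_induced R wf S /\ iso_to R S Oobs2).
Proof.
  destruct (classic (R c y)) as [Rcy | nRcy]; [right | left];
    apply quadruple_copy; auto using two_layered_Oobs1, two_layered_Oobs2;
    intros [] [] Hi Hj; try discriminate; cbn; unfold Oobs1, Oobs2;
    intuition discriminate.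
Qed.

End Violation.

Lemma up_regular_of_lt_transfer T (R : T -> T -> Prop) (wf : well_founded R) :
  (forall x y z, olt (Level R wf x) (Level R wf y) ->
     oeq (Level R wf y) (Level R wf z) -> R x y -> R x z) ->
  up_regular R wf.
Proof.
  intros H x y z Lxy Lyz; split; apply H; auto.
  - exact (olt_ole_trans _ _ _ Lxy (proj1 Lyz)).
  - exact (oeq_sym _ _ Lyz).
Qed.

Theorem mainTheorem10 :
  forall (T : Type) (R : T -> T -> Prop) (Hord : strict_order R) (wf : well_founded R),
    (up_regular R wf <->
       (~ exists S, level_induced R wf S /\ iso_to R S Oobs1) /\
       (~ exists S, level_induced R wf S /\ iso_to R S Oobs2))
    /\ (itov R -> up_regular R wf).
Proof.
  intros T R [_ R_trans] wf.
  assert (Hreg : up_regular R wf <->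
       (~ exists S, level_induced R wf S /\ iso_to R S Oobs1) /\
       (~ exists S, level_induced R wf S /\ iso_to R S Oobs2)).
  { split.
    - intros Hup; split; intros [S [HS Hiso]].
      + refine (up_regular_no_copy T R wf Oobs1 S two_layered_Oobs1 _ _ Hup HS Hiso);
          unfold Oobs1; intuition discriminate.
      + refine (up_regular_no_copy T R wf Oobs2 S two_layered_Oobs2 _ _ Hup HS Hiso);
          unfold Oobs2; intuition discriminate.
    - intros [N1 N2]; apply up_regular_of_lt_transfer.
      intros x y z Lxy Lyz Rxy; apply NNPP; intro nRxz.
      destruct (violation_witness T R wf R_trans x y z Lxy Lyz) as [c [Rcz Lcx]].
      destruct (violation_copy T R wf x y z Lxy Lyz Rxy nRxz c Rcz Lcx); auto. }
  split; [exact Hreg|].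
  intros [N1 N2]; apply Hreg; split; intros [S [_ Hiso]]; eauto.
Qed.
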